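(* For all $\lambda\in[0,1]$ and $\Delta_1,\Delta_2\in[0,\frac12]$, $C_{\mathrm{SKL}}((\mathrm{BSC}_{\Delta_1}\times\mathrm{BSC}_{\Delta_2})\circ B_{3,\lambda})\le\lambda^2\big(C_{\mathrm{SKL}}(\mathrm{BSC}_{\Delta_1})+C_{\mathrm{SKL}}(\mathrm{BSC}_{\Delta_2})\big)$, and the inequality is strict when $0<\lambda<1$ and $\min\{\Delta_1,\Delta_2\}<\frac12$.
   Context: $\mathrm{BSC}_\Delta:\{\pm\}\to\{\pm\}$ flips the input with probability $\Delta$. $B_{3,\lambda}:\{\pm\}\to\{\pm\}^2$ is the kernel $B_{3,\lambda}(x_1,x_2|y)=\lambda+\frac14(1-\lambda)$ if $x_1=x_2=y$ and $\frac14(1-\lambda)$ otherwise. $\times$ is the tensor product of channels. For a binary-input channel $P$, $C_{\mathrm{SKL}}(P)$ is the SKL information ($f$-information with $f(x)=(x-1)\log x$) between $X\sim\mathrm{Unif}(\{\pm\})$ and the output of $P$; in particular $C_{\mathrm{SKL}}(\mathrm{BSC}_\Delta)=\theta\,\mathrm{arctanh}\,\theta$ with $\theta=1-2\Delta$ (with value $+\infty$ at $\Delta=0$). *)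

From mathcomp Require Import all_boot all_order all_algebra.
From mathcomp Require Import all_classical all_reals.
From mathcomp Require Import ereal exp.
Set Implicit Arguments. Unset Strict Implicit. Unset Printing Implicit Defensive.
Import Order.TTheory GRing.Theory Num.Theory.
Local Open Scope ring_scope.

(* Binary alphabet {+,-} is encoded as bool (true = +, false = -).
   A channel (Markov kernel) W : A -> B -> R, W a b = P(output b | input a). *)

Section Channels.
Variable R : realType.

Definition BSC (D : R) : bool -> bool -> R :=
  fun x z => if z == x then 1 - D else D.

Definition B3 (l : R) : bool -> bool * bool -> R :=
  fun y x => if (x.1 == y) && (x.2 == y) then l + (1 - l) / 4 else (1 - l) / 4.

Definition chan_prod (A1 B1 A2 B2 : finType)
  (V1 : A1 -> B1 -> R) (V2 : A2 -> B2 -> R) : A1 * A2 -> B1 * B2 -> R :=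
  fun a b => V1 a.1 b.1 * V2 a.2 b.2.

Definition chan_comp (A B C : finType) (V : B -> C -> R) (U : A -> B -> R)
  : A -> C -> R :=
  fun a c => \sum_(b : B) U a b * V b c.

(* The term q f(p/q) with f(t) = (t-1) log t, with the usual conventions
   0 f(0/0) = 0, q f(0/q) = +oo (q>0), 0 f(p/0) = p f'(oo) = +oo (p>0). *)
Definition skl_term (p q : R) : \bar R :=
  if (p == 0) && (q == 0) then 0%E
  else if (p == 0) || (q == 0) then +oo%E
  else ((p - q) * ln (p / q))%:E.

(* SKL information between X ~ Unif{+-} and the output Y of W:
   D_f(P_{XY} || P_X x P_Y) with f(t) = (t-1) log t. *)
Definition C_SKL (Y : finType) (W : bool -> Y -> R) : \bar R :=
  (\sum_(x : bool) \sum_(y : Y)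
     skl_term (W x y / 2) ((1 / 2) * ((W true y + W false y) / 2)))%E.

End Channels.

From mathcomp Require Import all_boot all_order all_algebra.
From mathcomp Require Import all_classical all_reals.
From mathcomp Require Import ereal exp topology normedtype derive realfun ring lra.
Import Order.TTheory GRing.Theory Num.Theory numFieldNormedType.Exports.
Local Open Scope ring_scope.

(* Parametrize each BSC by its bias a = 1 - 2 D in [0, 1].  When a < 1 the
   channel has positive transition probabilities and its SKL information is
   a arctanh a = a/2 (ln (1 + a) - ln (1 - a)); for a = 1 it is +oo.  All
   outputs of the composite channel have probability
   (1 - l + l (1 +- a) (1 +- b)) / 4, so its SKL information is an explicit
   combination of four logarithms.  The difference "right-hand side minus
   left-hand side" factors as l/4 (a gap_{l,b}(a) + b gap_{l,a}(b)) for a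
   one-variable function gap_{l,b} with gap_{l,b}(0) = 0, whose derivative
   on [0, 1) is 2 l P(t^2) / D(t) with D > 0 and P a polynomial that is
   visibly a sum of nonnegative terms, strictly positive when 0 < l < 1.
   The mean value theorem then gives gap >= 0 (and > 0 strictly inside),
   which settles the case a, b < 1; the boundary a = 1 or b = 1 is a short
   case analysis on +oo. *)

Section Calculus.
Context {R : realType}.

Lemma is_derive_affine (c d x : R) : is_derive x 1 (fun t => c + d * t) d.
Proof.
have -> : (fun t => c + d * t) = (cst c + d *: id)%R by [].
have := is_deriveD (is_derive_cst c x 1) (is_deriveZ d (is_derive_id x 1)).
by rewrite add0r /GRing.scale /= mulr1.
Qed.

Lemma is_derive_ln_affine (c d x : R) :
  0 < c + d * x -> is_derive x 1 (fun t => ln (c + d * t)) (d / (c + d * x)).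
Proof.
move=> pos.
have := @is_derive1_comp R (@ln R) (fun t => c + d * t) x _ _
  (is_derive1_ln pos) (is_derive_affine c d x).
by rewrite mulrC.
Qed.

Lemma MVT_from0 (f df : R -> R) (a : R) : 0 < a -> f 0 = 0 ->
  (forall x, 0 <= x <= a -> is_derive x 1 f (df x)) ->
  exists2 c, 0 < c < a & f a = df c * a.
Proof.
move=> a0 f0 der.
have [c + fc] : exists2 c, c \in `]0, a[ & f a - f 0 = df c * (a - 0).
  apply: MVT => // [x|].
    by rewrite in_itv /= => /andP[? ?]; apply: der; rewrite !ltW.
  apply: derivable_within_continuous => x; rewrite in_itv /= => hx.
  exact: (@ex_derive _ _ _ _ _ _ _ (der x hx)).
rewrite in_itv /= => cin; exists c => //.
by move: fc; rewrite f0 !subr0.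
Qed.
End Calculus.

Section Mixture.
Context {R : realType}.

(* Four times the probability that B_{3,l} followed by BSCs of biases a, b
   produces an output agreeing (e = 1) or disagreeing (e = -1) with the input
   on each coordinate: the channel is a mixture, with weight l, of two
   independent noisy copies and, with weight 1 - l, of pure noise. *)
Definition mixK (l a b e1 e2 : R) : R := 1 - l + l * ((1 + e1 * a) * (1 + e2 * b)).

Lemma mixK_swap (l a b e1 e2 : R) : mixK l a b e1 e2 = mixK l b a e2 e1.
Proof. by rewrite /mixK; ring. Qed.

Lemma sign_factor_ge0 (e a : R) : `|e| <= 1 -> 0 <= a <= 1 -> 0 <= 1 + e * a.
Proof. by rewrite ler_norml => /andP[e0 e1] /andP[a0 a1]; nra. Qed.

Lemma sign_factor_gt0 (e a : R) : `|e| <= 1 -> 0 <= a < 1 -> 0 < 1 + e * a.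
Proof. by rewrite ler_norml => /andP[e0 e1] /andP[a0 a1]; nra. Qed.

Lemma convex_mix_gt0 (l P : R) : 0 <= l <= 1 -> 0 <= P -> (l < 1 \/ 0 < P) ->
  0 < 1 - l + l * P.
Proof.
move=> /andP[l0 l1] P0 [lt1|Pp]; first nra.
have [->|l_neq0] := eqVneq l 0; first by rewrite subr0 mul0r addr0.
have : 0 < l by rewrite lt_def l_neq0 l0.
nra.
Qed.

Lemma mixK_gt0 (l a b e1 e2 : R) : 0 <= l <= 1 -> 0 <= a <= 1 -> 0 <= b <= 1 ->
  `|e1| <= 1 -> `|e2| <= 1 -> (l < 1 \/ (a < 1 /\ b < 1)) -> 0 < mixK l a b e1 e2.
Proof.
move=> hl /andP[a0 a1] /andP[b0 b1] he1 he2 hc; apply: convex_mix_gt0 => //.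
  by apply: mulr_ge0; apply: sign_factor_ge0 => //; apply/andP.
case: hc => [|[a_lt1 b_lt1]]; [by left | right].
by apply: mulr_gt0; apply: sign_factor_gt0 => //; apply/andP.
Qed.

(* mixK is affine in its first bias, hence the derivative of its logarithm. *)
Lemma is_derive_ln_mixK {l b e1 e2 t : R} : 0 < mixK l t b e1 e2 ->
  is_derive t 1 (fun s => ln (mixK l s b e1 e2)) (l * e1 * (1 + e2 * b) / mixK l t b e1 e2).
Proof.
have affine s : mixK l s b e1 e2 = (1 - l + l * (1 + e2 * b)) + l * e1 * (1 + e2 * b) * s.
  by rewrite /mixK; ring.
rewrite affine => pos; under eq_fun do rewrite affine.
exact: is_derive_ln_affine.
Qed.
End Mixture.

Section Gap.
Context {R : realType}.
Variables (l b : R).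
Local Notation K e1 e2 t := (mixK l t b e1 e2).

Definition gap (t : R) : R :=
  2 * l * (ln (1 + t) - ln (1 - t)) -
  (ln (K 1 1 t) - ln (K (-1) (-1) t) + ln (K 1 (-1) t) - ln (K (-1) 1 t)).

Definition gap' (t : R) : R :=
  2 * l * (1 / (1 + t) + 1 / (1 - t)) -
  (l * (1 + b) / K 1 1 t + l * (1 - b) / K (-1) (-1) t
   + l * (1 - b) / K 1 (-1) t + l * (1 + b) / K (-1) 1 t).

Lemma gap0 : gap 0 = 0.
Proof. by rewrite /gap /mixK !mulr0 !addr0 subr0; ring. Qed.

Lemma gap_is_derive (t : R) : -1 < t < 1 ->
  0 < K 1 1 t -> 0 < K (-1) (-1) t -> 0 < K 1 (-1) t -> 0 < K (-1) 1 t ->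
  is_derive t 1 gap (gap' t).
Proof.
move=> /andP[tm tp] k1 k2 k3 k4.
have dp : is_derive t 1 (fun s => ln (1 + s)) (1 / (1 + 1 * t)).
  by under eq_fun do rewrite -[s in 1 + s]mul1r; apply: is_derive_ln_affine; lra.
have dm : is_derive t 1 (fun s => ln (1 - s)) (-1 / (1 + -1 * t)).
  by under eq_fun do rewrite -mulN1r; apply: is_derive_ln_affine; lra.
have := is_deriveB (is_deriveZ (2 * l) (is_deriveB dp dm))
  (is_deriveB (is_deriveD (is_deriveB (is_derive_ln_mixK k1) (is_derive_ln_mixK k2))
     (is_derive_ln_mixK k3)) (is_derive_ln_mixK k4)).
move=> /is_derive_eq; apply.
by rewrite /gap' /GRing.scale /= !mul1r !mulN1r; ring.
Qed.

(* The numerator of gap', as a polynomial in s = t^2, written as a sum of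
   three products whose factors are nonnegative for l, b, s in [0, 1]. *)
Definition gap_num (s : R) : R :=
  (1 - s) * (2 * l * b ^+ 2 * (1 - l) * (1 - l ^+ 2 * b ^+ 2))
  + s * (2 * (1 - l) ^+ 2 * (1 + l + 2 * l * b) * (1 + l - 2 * l * b))
  + s * (1 - s) * (2 * (1 - b ^+ 2) * l ^+ 2 * (1 - l * b ^+ 2 - l ^+ 2 * (1 - b ^+ 2))).

Lemma gap'_factor (t : R) : 1 + t != 0 -> 1 - t != 0 ->
  K 1 1 t != 0 -> K (-1) (-1) t != 0 -> K 1 (-1) t != 0 -> K (-1) 1 t != 0 ->
  gap' t = 2 * l * gap_num (t ^+ 2) /
    ((1 + t) * (1 - t) * (K 1 1 t * K (-1) 1 t) * (K (-1) (-1) t * K 1 (-1) t)).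
Proof.
rewrite /gap' /gap_num /mixK !mul1r => h1 h2 h3 h4 h5 h6.
by field; rewrite h1 h2 h3 h4 h5 h6.
Qed.

Hypotheses (hl : 0 <= l <= 1) (hb : 0 <= b < 1).

Lemma weight_bounds : [/\ b ^+ 2 <= 1, l * b ^+ 2 <= l & l ^+ 2 <= l].
Proof.
move: hl hb => /andP[l0 l1] /andP[b0 b1].
have b2 : b ^+ 2 <= 1 by nra.
by split => //; nra.
Qed.

Lemma gap_num_ge0 (s : R) : 0 <= s <= 1 -> 0 <= gap_num s.
Proof.
move: hl hb => /andP[l0 l1] /andP[b0 b1] /andP[s0 s1].
have [b2 lb l2] := weight_bounds.
by rewrite /gap_num !addr_ge0 ?mulr_ge0 //; nra.
Qed.

(* Strictly inside, the middle term of gap_num is positive. *)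
Lemma gap_num_gt0 (s : R) : l < 1 -> 0 < s <= 1 -> 0 < gap_num s.
Proof.
move=> l1 /andP[s0 s1]; move: hl hb => /andP[l0 _] /andP[b0 b1].
have [b2 lb l2] := weight_bounds.
rewrite /gap_num; apply: ltr_wpDr; last apply: ltr_wpDl.
- by rewrite ?mulr_ge0 //; nra.
- by rewrite ?mulr_ge0 //; nra.
- by rewrite !mulr_gt0 ?exprn_gt0 ?subr_gt0 //; nra.
Qed.

Lemma K_gt0 {t : R} : 0 <= t < 1 ->
  [/\ 0 < K 1 1 t, 0 < K (-1) (-1) t, 0 < K 1 (-1) t & 0 < K (-1) 1 t].
Proof.
move=> /andP[t0 t1]; case/andP: hb => b0 b1.
have n1 : `|1 : R| <= 1 by rewrite normr1.
have nN1 : `|-1 : R| <= 1 by rewrite normrN normr1.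
by split; apply: mixK_gt0 => //; rewrite ?t0 ?b0 ?ltW //; right.
Qed.

Lemma gap'_factor_pos {t : R} : 0 <= t < 1 ->
  exists2 D, 0 < D & gap' t = 2 * l * gap_num (t ^+ 2) / D.
Proof.
move=> ht; have [k1 k2 k3 k4] := K_gt0 ht.
have [tp tm] : 0 < 1 + t /\ 0 < 1 - t by case/andP: ht => ? ?; split; lra.
eexists; last by rewrite gap'_factor ?gt_eqF.
by rewrite !mulr_gt0.
Qed.

Lemma gap'_ge0 (t : R) : 0 <= t < 1 -> 0 <= gap' t.
Proof.
move=> ht; have [D D0 ->] := gap'_factor_pos ht; case/andP: hl => l0 _.
apply: divr_ge0; last exact: ltW.
rewrite !mulr_ge0 // gap_num_ge0 // sqr_ge0 /=.
by case/andP: ht => t0 t1; nra.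
Qed.

Lemma gap'_gt0 (t : R) : 0 < l < 1 -> 0 < t < 1 -> 0 < gap' t.
Proof.
move=> /andP[l0 l1] /andP[t0 t1].
have ht : 0 <= t < 1 by rewrite ltW.
have [D D0 ->] := gap'_factor_pos ht.
by rewrite divr_gt0 // !mulr_gt0 // gap_num_gt0 // exprn_gt0 //=; nra.
Qed.

Lemma gap_mvt {a : R} : 0 < a < 1 -> exists2 c, 0 < c < a & gap a = gap' c * a.
Proof.
move=> /andP[a0 a1]; apply: MVT_from0 => // [|x /andP[x0 xa]]; first exact: gap0.
have x1 : x < 1 by rewrite (le_lt_trans xa a1).
have hx : 0 <= x < 1 by rewrite x0.
have [k1 k2 k3 k4] := K_gt0 hx.
by apply: gap_is_derive; rewrite // (lt_le_trans _ x0) ?ltrN10.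
Qed.

Lemma gap_ge0 (a : R) : 0 <= a < 1 -> 0 <= gap a.
Proof.
move=> /andP[a0 a1]; have [->|a_neq0] := eqVneq a 0; first by rewrite gap0.
have ha : 0 < a < 1 by rewrite lt_def a_neq0 a0 a1.
have [c /andP[c0 ca] ->] := gap_mvt ha.
by rewrite mulr_ge0 // gap'_ge0 // ltW //= (lt_trans ca a1).
Qed.

Lemma gap_gt0 (a : R) : 0 < l < 1 -> 0 < a < 1 -> 0 < gap a.
Proof.
move=> hl' ha; have [c /andP[c0 ca] ->] := gap_mvt ha; case/andP: ha => a0 a1.
by rewrite mulr_gt0 // gap'_gt0 // c0 (lt_trans ca a1).
Qed.
End Gap.

Local Notation Wcomp l a b :=
  (chan_comp (chan_prod (BSC ((1 - a) / 2)) (BSC ((1 - b) / 2))) (B3 l)).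

Section Information.
Context {R : realType}.

Lemma skl_term_ge0 (p q : R) : 0 <= p -> 0 <= q -> (0 <= skl_term p q)%E.
Proof.
move=> p0 q0; rewrite /skl_term; case: ifP => // _; case: ifP => [_|]; first exact: leey.
move=> /negbT; rewrite negb_or => /andP[p_neq0 q_neq0].
have [pp qp] : 0 < p /\ 0 < q by rewrite !lt_def p_neq0 q_neq0 p0 q0.
rewrite lee_fin; have [pq|qp'] := lerP p q.
  by apply: mulr_le0; [rewrite subr_le0 | apply: ln_le0; rewrite ler_pdivrMr // mul1r].
by apply: mulr_ge0; [rewrite subr_ge0 ltW | apply: ln_ge0; rewrite ler_pdivlMr // mul1r ltW].
Qed.

Lemma C_SKL_ge0 (Y : finType) (W : bool -> Y -> R) :
  (forall x y, 0 <= W x y) -> (0 <= C_SKL W)%E.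
Proof.
move=> W0; apply: sume_ge0 => x _; apply: sume_ge0 => y _.
by rewrite skl_term_ge0 ?mulr_ge0 ?divr_ge0 ?addr_ge0.
Qed.

Lemma skl_term_gt0 (p q : R) : 0 < p -> 0 < q -> skl_term p q = ((p - q) * ln (p / q))%:E.
Proof. by move=> p0 q0; rewrite /skl_term !gt_eqF. Qed.

Lemma skl_pair (u v : R) : 0 < u -> 0 < v ->
  (u / 2 - 1 / 2 * ((u + v) / 2)) * ln ((u / 2) / (1 / 2 * ((u + v) / 2))) +
  (v / 2 - 1 / 2 * ((u + v) / 2)) * ln ((v / 2) / (1 / 2 * ((u + v) / 2))) =
  (u - v) * (ln u - ln v) / 4.
Proof.
move=> u0 v0; have uv0 : 0 < u + v by rewrite addr_gt0.
have m0 : 0 < (u + v) / 2 by rewrite divr_gt0.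
have ratio w : (w / 2) / (1 / 2 * ((u + v) / 2)) = w / ((u + v) / 2).
  by field; rewrite gt_eqF.
by rewrite !ratio !ln_div ?posrE //; field.
Qed.

Lemma C_SKL_gt0 (Y : finType) (W : bool -> Y -> R) : (forall x y, 0 < W x y) ->
  C_SKL W = (\sum_(y : Y) (W true y - W false y) * (ln (W true y) - ln (W false y)) / 4)%:E.
Proof.
move=> W0; rewrite /C_SKL big_bool /=.
have avg0 y : 0 < 1 / 2 * ((W true y + W false y) / 2).
  by rewrite mulr_gt0 // divr_gt0 // addr_gt0.
under eq_bigr do rewrite skl_term_gt0 ?divr_gt0 //.
under [X in (_ + X)%E]eq_bigr do rewrite skl_term_gt0 ?divr_gt0 //.
rewrite !sumEFin -EFinD -big_split /=; congr (_%:E); apply: eq_bigr => y _.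
exact: skl_pair.
Qed.

Lemma BSC_ge0 (D : R) : 0 <= D <= 1 -> forall x y, 0 <= BSC D x y.
Proof. by move=> /andP[D0 D1] x y; rewrite /BSC; case: (y == x); lra. Qed.

Lemma BSC_gt0 (a : R) : 0 <= a < 1 -> forall x y, 0 < BSC ((1 - a) / 2) x y.
Proof. by move=> /andP[a0 a1] x y; rewrite /BSC; case: (y == x); lra. Qed.

Lemma C_SKL_BSC (a : R) : 0 <= a < 1 ->
  C_SKL (BSC ((1 - a) / 2)) = (a / 2 * (ln (1 + a) - ln (1 - a)))%:E.
Proof.
move=> ha; rewrite C_SKL_gt0; last exact: BSC_gt0.
case/andP: ha => a0 a1; rewrite big_bool /BSC /=.
rewrite (_ : 1 - (1 - a) / 2 = (1 + a) / 2); last by field.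
by congr (_%:E); rewrite !ln_div ?posrE; lra.
Qed.

Lemma C_SKL_BSC0 : C_SKL (BSC (0 : R)) = +oo%E.
Proof.
have half_neq0 : (1 / 2 == 0 :> R) = false by apply/negbTE; rewrite gt_eqF.
have quarter_neq0 : (1 / 2 * (1 / 2) == 0 :> R) = false.
  by apply/negbTE; rewrite gt_eqF // mulr_gt0.
rewrite /C_SKL !big_bool /BSC /= /skl_term !mul0r !subr0 add0r addr0 eqxx /=.
by rewrite half_neq0 quarter_neq0 /= addey // addye.
Qed.

Lemma sum_bool2 (F : bool * bool -> R) : \sum_(p : bool * bool) F p =
  F (true, true) + F (true, false) + (F (false, true) + F (false, false)).
Proof.
rewrite (eq_bigr (fun p => F (p.1, p.2))); last by case.
by rewrite -(pair_bigA _ (fun i j => F (i, j))) /= !big_bool.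
Qed.

(* +1 if an output coordinate agrees with the input, -1 otherwise. *)
Definition sgn (c : bool) : R := if c then 1 else -1.

Lemma norm_sgn (c : bool) : `|sgn c| <= 1.
Proof. by case: c; rewrite /sgn ?normrN normr1. Qed.

Lemma WcompE (l a b : R) (y : bool) (z : bool * bool) :
  Wcomp l a b y z = mixK l a b (sgn (z.1 == y)) (sgn (z.2 == y)) / 4.
Proof.
rewrite /chan_comp sum_bool2 /B3 /chan_prod /BSC /mixK /sgn /=.
by case: y; case: z => [[] []] /=; field.
Qed.

Lemma Wcomp_gt0 (l a b : R) : 0 <= l <= 1 -> 0 <= a <= 1 -> 0 <= b <= 1 ->
  (l < 1 \/ (a < 1 /\ b < 1)) -> forall y z, 0 < Wcomp l a b y z.
Proof. by move=> hl ha hb hc y z; rewrite WcompE divr_gt0 // mixK_gt0 // norm_sgn. Qed.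

Lemma C_SKL_Wcomp (l a b : R) : 0 <= l <= 1 -> 0 <= a <= 1 -> 0 <= b <= 1 ->
  (l < 1 \/ (a < 1 /\ b < 1)) ->
  C_SKL (Wcomp l a b) =
  (l / 4 * ((a + b) * (ln (mixK l a b 1 1) - ln (mixK l a b (-1) (-1)))
          + (a - b) * (ln (mixK l a b 1 (-1)) - ln (mixK l a b (-1) 1))))%:E.
Proof.
move=> hl ha hb hc; rewrite C_SKL_gt0; last exact: Wcomp_gt0.
have lnW y z :
    ln (Wcomp l a b y z) = ln (mixK l a b (sgn (z.1 == y)) (sgn (z.2 == y))) - ln 4.
  by rewrite WcompE ln_div ?posrE // mixK_gt0 // norm_sgn.
by rewrite sum_bool2 !lnW !WcompE /sgn /=; congr (_%:E); rewrite /mixK; field.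
Qed.
End Information.

Section Contraction.
Context {R : realType}.

Local Notation lhs l a b := (C_SKL (Wcomp l a b)).
Local Notation rhs l a b :=
  ((l ^+ 2)%:E * (C_SKL (BSC ((1 - a) / 2)) + C_SKL (BSC ((1 - b) / 2))))%E.

Lemma contraction_gap (l a b : R) :
  l ^+ 2 * (a / 2 * (ln (1 + a) - ln (1 - a)) + b / 2 * (ln (1 + b) - ln (1 - b))) -
  l / 4 * ((a + b) * (ln (mixK l a b 1 1) - ln (mixK l a b (-1) (-1)))
         + (a - b) * (ln (mixK l a b 1 (-1)) - ln (mixK l a b (-1) 1)))
  = l / 4 * (a * gap l b a + b * gap l a b).
Proof. by rewrite /gap !(mixK_swap l b a); field. Qed.

Lemma contraction_interior (l a b : R) : 0 <= l <= 1 -> 0 <= a < 1 -> 0 <= b < 1 ->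
  (lhs l a b <= rhs l a b)%E /\
  (0 < l < 1 -> 0 < a \/ 0 < b -> (lhs l a b < rhs l a b)%E).
Proof.
move=> hl ha hb; have [[a0 a1] [b0 b1]] := (andP ha, andP hb).
have [ha' hb'] : 0 <= a <= 1 /\ 0 <= b <= 1 by rewrite a0 b0 !ltW.
rewrite C_SKL_Wcomp //; last by right.
rewrite !C_SKL_BSC // -EFinD -EFinM lee_fin lte_fin -subr_ge0 -subr_gt0 contraction_gap.
have gba : 0 <= gap l b a by apply: gap_ge0.
have gab : 0 <= gap l a b by apply: gap_ge0.
have [l0 _] := andP hl.
split; first by rewrite mulr_ge0 ?divr_ge0 ?addr_ge0 ?mulr_ge0.
move=> /andP[lp lt1] [ap|bp]; rewrite mulr_gt0 ?divr_gt0 //.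
- by rewrite ltr_pwDl ?mulr_ge0 ?mulr_gt0 // gap_gt0 ?lp ?ap.
- by rewrite ltr_wpDl ?mulr_ge0 ?mulr_gt0 // gap_gt0 ?lp ?bp.
Qed.

(* If one BSC is noiseless the right-hand side is +oo (or 0 when l = 0), while
   the left-hand side is finite as soon as l < 1. *)
Lemma contraction_boundary (l a b : R) : 0 <= l <= 1 -> 0 <= a <= 1 -> 0 <= b <= 1 ->
  a = 1 \/ b = 1 ->
  (lhs l a b <= rhs l a b)%E /\ (0 < l < 1 -> (lhs l a b < rhs l a b)%E).
Proof.
move=> hl ha hb ab1.
have ninf c : 0 <= c <= 1 -> C_SKL (BSC ((1 - c) / 2)) != -oo%E.
  move=> /andP[c0 c1]; rewrite gt_eqF // (lt_le_trans (ltNyr 0)) //.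
  by apply/C_SKL_ge0/BSC_ge0; apply/andP; split; lra.
have -> : (C_SKL (BSC ((1 - a) / 2)) + C_SKL (BSC ((1 - b) / 2)) = +oo)%E.
  by case: ab1 => [|] ->; rewrite subrr mul0r C_SKL_BSC0 ?addye ?addey // ninf.
have [->|l_neq0] := eqVneq l 0.
  split=> [|/andP[]]; last by rewrite ltxx.
  rewrite C_SKL_Wcomp ?lexx ?ler01 //; last by left; exact: ltr01.
  by rewrite !mul0r expr0n mul0e.
have l_gt0 : 0 < l by rewrite lt_def l_neq0; case/andP: hl.
rewrite gt0_muley ?lte_fin ?exprn_gt0 //; split=> [|/andP[_ l1]]; first exact: leey.
by rewrite C_SKL_Wcomp ?ltey //; left.
Qed.

Lemma contraction_bias (l a b : R) : 0 <= l <= 1 -> 0 <= a <= 1 -> 0 <= b <= 1 ->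
  (lhs l a b <= rhs l a b)%E /\
  (0 < l < 1 -> 0 < a \/ 0 < b -> (lhs l a b < rhs l a b)%E).
Proof.
move=> hl ha hb; have [[a0 a1] [b0 b1]] := (andP ha, andP hb).
case: (boolP ((a < 1) && (b < 1))) => [/andP[a_lt1 b_lt1] | /nandP not_interior].
  by apply: contraction_interior; rewrite ?a0 ?b0.
have ab1 : a = 1 \/ b = 1.
  case: not_interior; rewrite -leNgt => ge1; [left | right];
    by apply/eqP; rewrite eq_le ge1 ?a1 ?b1.
have [le strict] := contraction_boundary l a b hl ha hb ab1.
by split=> // hl' _; exact: strict.
Qed.
End Contraction.

Theorem mainTheorem9 (R : realType) (l D1 D2 : R) :
  0 <= l <= 1 -> 0 <= D1 <= 1 / 2 -> 0 <= D2 <= 1 / 2 ->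
  (C_SKL (chan_comp (chan_prod (BSC D1) (BSC D2)) (B3 l))
     <= (l ^+ 2)%:E * (C_SKL (BSC D1) + C_SKL (BSC D2)))%E /\
  (0 < l < 1 -> Num.min D1 D2 < 1 / 2 ->
   (C_SKL (chan_comp (chan_prod (BSC D1) (BSC D2)) (B3 l))
     < (l ^+ 2)%:E * (C_SKL (BSC D1) + C_SKL (BSC D2)))%E).
Proof.
move=> hl.
have [a ->] : exists a : R, D1 = (1 - a) / 2 by exists (1 - 2 * D1); field.
have [b ->] : exists b : R, D2 = (1 - b) / 2 by exists (1 - 2 * D2); field.
move=> /andP[a0 a1] /andP[b0 b1].
have [ha hb] : 0 <= a <= 1 /\ 0 <= b <= 1 by split; apply/andP; split; lra.
have [le strict] := contraction_bias l a b hl ha hb.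
split=> // hl' min_lt; apply: strict => //.
by move: min_lt; rewrite gt_min => /orP[] ?; [left | right]; lra.
Qed.
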